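(* Let $a_1,\dots,a_n$ be positive integers, let $\mathcal{G}=\mathcal{G}[a_1,\dots,a_n]$, let $\mathcal{G}_{\leftrightarrow}=\mathcal{G}[a_n,\dots,a_2,a_1,a_1,a_2,\dots,a_n]$ (the palindromification of $\mathcal{G}$), and let $\mathcal{G}'=\mathcal{G}[a_2,\dots,a_n]$. Then \[ m(\mathcal{G}_{\leftrightarrow})=m(\mathcal{G})^2+m(\mathcal{G}')^2. \]
   Context: A tile is a unit square in the plane with sides parallel to the coordinate axes, viewed as a graph with 4 vertices and 4 edges. A snake graph with $d\ge 1$ tiles is a planar graph which is the union of tiles $G_1,\dots,G_d$ such that for each $i$, $G_{i+1}$ is the translate of $G_i$ by $(0,1)$ or by $(1,0)$; thus $G_i$ and $G_{i+1}$ share exactly one edge $e_i$. A sign function on a snake graph is a map $f$ from its edges to $\{+,-\}$ such that in every tile the north and west edges have the same sign, the south and east edges have the same sign, and the north and south edges have opposite signs. For a sequence $(a_1,\dots,a_n)$ of positive integers with $d=a_1+\cdots+a_n-1\ge 1$, $\mathcal{G}[a_1,\dots,a_n]$ is the unique snake graph with tiles $G_1,\dots,G_d$ for which there exist a sign function $f$ and an edge $e_d\in\{\text{north edge of }G_d,\text{east edge of }G_d\}$ such that, with $e_0$ the south edge of $G_1$ and $e_i$ ($1\le i\le d-1$) the edge shared by $G_i,G_{i+1}$, the sequence $(f(e_0),\dots,f(e_d))$ consists of $a_1$ copies of a sign $s$, then $a_2$ copies of $-s$, then $a_3$ copies of $s$, and so on alternately. By convention $\mathcal{G}[1]$ is a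 single edge, and the snake graph of the empty sequence (which occurs as $\mathcal{G}'$ when $n=1$) is a single edge. For a graph $\mathcal{H}$, $m(\mathcal{H})$ denotes its number of perfect matchings (a single edge has exactly one). *)

From mathcomp Require Import all_boot.
Set Implicit Arguments. Unset Strict Implicit. Unset Printing Implicit Defensive.

(* A lattice point; tiles are identified by their lower-left corner. *)
Definition point := (nat * nat)%type.

(* A unit edge: (x, y, h).  If h = true it is the horizontal segment from
   (x,y) to (x+1,y); if h = false it is the vertical segment from (x,y) to
   (x,y+1). *)
Definition edge := (nat * nat * bool)%type.

Definition esrc (e : edge) : point := (e.1.1, e.1.2).
Definition edst (e : edge) : point :=
  if e.2 then (e.1.1.+1, e.1.2) else (e.1.1, e.1.2.+1).

Definition south (p : point) : edge := (p.1, p.2, true).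
Definition north (p : point) : edge := (p.1, p.2.+1, true).
Definition west  (p : point) : edge := (p.1, p.2, false).
Definition east  (p : point) : edge := (p.1.+1, p.2, false).

Definition step (p : point) (b : bool) : point :=
  if b then (p.1, p.2.+1) else (p.1.+1, p.2).

(* A snake graph with d >= 1 tiles G_1,...,G_d is encoded (up to translation)
   by the list D of the d-1 translation directions, G_1 having its
   lower-left corner at (0,0). *)
Fixpoint tiles_from (p : point) (D : seq bool) : seq point :=
  p :: (if D is b :: D' then tiles_from (step p b) D' else [::]).

Definition tiles (D : seq bool) : seq point := tiles_from (0, 0) D.

Definition edges (D : seq bool) : seq edge :=
  undup (flatten [seq [:: south p; north p; west p; east p] | p <- tiles D]).

Definition verts (D : seq bool) : seq point :=
  undup (flatten [seq [:: esrc e; edst e] | e <- edges D]).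

Definition incident (e : edge) (v : point) : bool := (esrc e == v) || (edst e == v).

Definition perfect_matching (D : seq bool) (S : {set 'I_(size (edges D))}) : bool :=
  all (fun v => count (fun i : 'I_(size (edges D)) =>
                         (i \in S) && incident (nth (0, 0, true) (edges D) i) v)
                      (enum 'I_(size (edges D))) == 1)
      (verts D).

Arguments perfect_matching : clear implicits.

Definition num_pm (D : seq bool) : nat :=
  #|[set S : {set 'I_(size (edges D))} | perfect_matching D S]|.

Definition sign_function (D : seq bool) (f : edge -> bool) : Prop :=
  forall p, p \in tiles D ->
    [/\ f (north p) = f (west p), f (south p) = f (east p) & f (north p) != f (south p)].

(* The edges e_1, ..., e_d: e_i shared by G_i and G_(i+1) for i < d, and
   e_d the north (eN = true) or east (eN = false) edge of G_d. *)
Fixpoint walk (p : point) (D : seq bool) (eN : bool) : seq edge :=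
  match D with
  | [::] => [:: if eN then north p else east p]
  | b :: D' => (if b then north p else east p) :: walk (step p b) D' eN
  end.

Definition distinguished_edges (D : seq bool) (eN : bool) : seq edge :=
  south (0, 0) :: walk (0, 0) D eN.

Definition sign_blocks (s : bool) (a : seq nat) : seq bool :=
  flatten [seq nseq (nth 0 a i) (if odd i then ~~ s else s) | i <- iota 0 (size a)].

(* When
   d = a_1 + ... + a_n - 1 = 0 (the sequence is empty or [1]) the graph is a
   single edge, and we require D = [::] (D is then irrelevant). *)
Definition is_snake (a : seq nat) (D : seq bool) : Prop :=
  (sumn a <= 1 /\ D = [::]) \/
  (1 < sumn a /\ size D = sumn a - 2 /\
   exists (f : edge -> bool) (eN : bool) (s : bool),
     sign_function D f /\
     map f (distinguished_edges D eN) = sign_blocks s a).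

(* m(G[a]) : a single edge has exactly one perfect matching. *)
Definition m_snake (a : seq nat) (D : seq bool) : nat :=
  if sumn a <= 1 then 1 else num_pm D.

(* Let A(D) be the number of perfect matchings of a snake graph D and B(D, c)
   the number of those containing the edge through which its last tile is left
   in direction c (north or east).  Gluing a new tile in direction b adds two
   vertices u', v' and three edges; a perfect matching covers u', v' either by
   the new edge u'v' or by the two edges joining them to the old graph, so
   A' = A + B(b) and B'(c) = A or B(b) according as c = b or not.  Hence the
   row (A, B) is multiplied by one of two 2x2 matrices depending on whether the
   snake goes straight through a tile or turns.  The sign function flips sign
   exactly at the straight tiles, i.e. at the block boundaries of
   G[a_1, ..., a_n], and grouping the steps block by block turns the product
   into M(a_1) ... M(a_n) with M(x) = [[x, 1], [1, 0]].  So m(G[a]) is the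
   top-left entry of P = M(a_1) ... M(a_n).  As each M(x) is symmetric, the
   palindrome gives P^T P, whose top-left entry is P_00^2 + P_10^2, and
   P_10 is the top-left entry of M(a_2) ... M(a_n). *)

From mathcomp Require Import all_boot ssralg zmodp matrix zify.
Set Implicit Arguments. Unset Strict Implicit. Unset Printing Implicit Defensive.

Import GRing.Theory.

Section Sublists.
Variable T : eqType.
Implicit Types (s : seq T) (P : pred (seq T)).

Fixpoint sublists s : seq (seq T) :=
  if s is x :: s' then [seq x :: l | l <- sublists s'] ++ sublists s' else [:: [::]].

Lemma sublists_sub s l : l \in sublists s -> {subset l <= s}.
Proof.
elim: s l => [|x s IH] l /=; first by rewrite inE => /eqP ->.
rewrite mem_cat => /orP [/mapP [l' /IH sub ->] | /IH sub] w.
  by rewrite !inE => /orP [-> // | /sub ->]; rewrite orbT.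
by move/sub; rewrite inE => ->; rewrite orbT.
Qed.

Lemma count_sublists_cat P s1 s2 :
  count P (sublists (s1 ++ s2)) =
  \sum_(l <- sublists s1) count (fun l' => P (l ++ l')) (sublists s2).
Proof.
elim: s1 P => [|x s1 IH] P /=; first by rewrite big_seq1.
by rewrite count_cat count_map !IH big_cat big_map.
Qed.

Definition perm_invariant P := forall s1 s2, perm_eq s1 s2 -> P s1 = P s2.

Lemma perm_invariant_catl P s : perm_invariant P -> perm_invariant (fun l => P (s ++ l)).
Proof. by move=> PP s1 s2 eq12; apply: PP; rewrite perm_cat2l. Qed.

Lemma count_sublists_insert P s1 x s2 : perm_invariant P ->
  count P (sublists (s1 ++ x :: s2)) = count P (sublists (x :: s1 ++ s2)).
Proof.
move=> PP; rewrite /= count_cat count_map !count_sublists_cat -big_split /=.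
apply: eq_bigr => l _; rewrite count_cat count_map; congr (_ + _).
by apply: eq_count => l'; apply: PP; rewrite -cat1s perm_catCA.
Qed.

Lemma count_sublists_perm P s1 s2 : perm_invariant P -> perm_eq s1 s2 ->
  count P (sublists s1) = count P (sublists s2).
Proof.
elim: s1 s2 P => [|x s1 IH] s2 P PP eq12.
  by move: eq12; rewrite perm_sym => /perm_nilP ->.
have x_s2 : x \in s2 by rewrite -(perm_mem eq12) mem_head.
case/splitPr: x_s2 eq12 => l r eq12.
have {}eq12 : perm_eq s1 (l ++ r).
  by rewrite -(perm_cons x) (permPl eq12) -cat1s perm_catCA.
rewrite count_sublists_insert //= !count_cat !count_map.
by rewrite !(IH (l ++ r)) //; exact: (perm_invariant_catl [:: x]).
Qed.

End Sublists.

Section SetCons.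
Variable n : nat.

Definition set_cons (bS : bool * {set 'I_n}) : {set 'I_n.+1} :=
  (if bS.1 then [set ord0] else set0) :|: lift ord0 @: bS.2.

Definition set_uncons (S : {set 'I_n.+1}) : bool * {set 'I_n} :=
  (ord0 \in S, [set i | lift ord0 i \in S]).

Lemma mem0_set_cons bS : (ord0 \in set_cons bS) = bS.1.
Proof.
rewrite !inE; case: bS.1; rewrite ?inE ?eqxx //=.
by apply/imsetP => -[i _ /eqP]; rewrite (negbTE (neq_lift _ _)).
Qed.

Lemma mem_lift_set_cons bS i : (lift ord0 i \in set_cons bS) = (i \in bS.2).
Proof.
rewrite !inE (mem_imset _ _ (@lift_inj _ ord0)).
by case: bS.1; rewrite ?inE // eq_sym (negbTE (neq_lift _ _)).
Qed.

Lemma set_consK : cancel set_cons set_uncons.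
Proof.
case=> b S; rewrite /set_uncons mem0_set_cons; congr (_, _).
by apply/setP => i; rewrite inE mem_lift_set_cons.
Qed.

Lemma set_unconsK : cancel set_uncons set_cons.
Proof.
move=> S; apply/setP => j; case: (unliftP ord0 j) => [i ->| ->].
  by rewrite mem_lift_set_cons inE.
by rewrite mem0_set_cons.
Qed.

Lemma enum_set_cons bS :
  enum (set_cons bS) = nseq bS.1 ord0 ++ map (lift ord0) (enum bS.2).
Proof.
rewrite /enum_mem -!enumT enum_ordSl /= mem0_set_cons filter_map.
by rewrite (eq_filter (mem_lift_set_cons bS)); case: bS.1.
Qed.

End SetCons.

Section SubsetsAsSublists.
Variables (T : eqType) (x0 : T).

Definition select (s : seq T) (S : {set 'I_(size s)}) : seq T :=
  [seq nth x0 s i | i : 'I_(size s) <- enum S].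

Lemma sum_sets_sublists (s : seq T) (P : pred (seq T)) :
  \sum_(S : {set 'I_(size s)}) P (select S) = count P (sublists s).
Proof.
elim: s P => [|x s IH] P /=.
  rewrite (big_pred1 set0) => [|S]; first by rewrite /select enum_set0 addn0.
  by apply/esym/eqP/setP => -[].
rewrite (reindex (@set_cons (size s))) /=; last first.
  by exists (@set_uncons (size s)) => bS _; [exact: set_consK | exact: set_unconsK].
rewrite -(pair_big xpredT xpredT (fun b S => P (@select (x :: s) (set_cons (b, S))) : nat)).
rewrite big_bool /= count_cat count_map -!IH.
by congr (_ + _); apply: eq_bigr => S _; rewrite /select enum_set_cons /= -map_comp.
Qed.

Lemma card_sets_sublists (s : seq T) (P : pred (seq T)) :
  #|[set S : {set 'I_(size s)} | P (select S)]| = count P (sublists s).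
Proof.
rewrite -sum_sets_sublists -sum1_card big_mkcond.
by apply: eq_bigr => S _; rewrite inE.
Qed.

End SubsetsAsSublists.

Section Matchings.
Variables (vT eT : eqType) (inc : eT -> vT -> bool).

Definition is_pm (W : seq vT) (L : seq eT) : bool :=
  all (fun w => count (inc^~ w) L == 1) W.

Lemma is_pm_perm W : perm_invariant (is_pm W).
Proof. by move=> L1 L2 /permP eqL; apply: eq_all => w; rewrite eqL. Qed.

Lemma count_pm_eq (W1 W2 : seq vT) (E1 E2 c : seq eT) : W1 =i W2 -> perm_eq E1 E2 ->
  count (fun L => is_pm W1 (c ++ L)) (sublists E1) =
  count (fun L => is_pm W2 (c ++ L)) (sublists E2).
Proof.
move=> eqW eqE; rewrite (count_sublists_perm (perm_invariant_catl _ (is_pm_perm _)) eqE).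
by apply: eq_count => L; apply: eq_all_r.
Qed.

Section Extension.
Variables (V : seq vT) (E : seq eT) (u v u' v' : vT) (x y z t : eT).
Hypothesis endpoints_E : forall e w, e \in E -> inc e w -> w \in V.
Hypotheses (u_V : u \in V) (v_V : v \in V) (u'_V : u' \notin V) (v'_V : v' \notin V).
Hypotheses (neq_uv : u != v) (neq_u'v' : u' != v').
Hypothesis inc_x : forall w, inc x w = (w == u) || (w == u').
Hypothesis inc_y : forall w, inc y w = (w == v) || (w == v').
Hypothesis inc_z : forall w, inc z w = (w == u') || (w == v').
Hypothesis inc_t : forall w, inc t w = (w == u) || (w == v).

Local Notation V' := [:: u', v' & V].
Local Notation E' := [:: x, y, z & E].

Lemma neq_new w w' : w \in V -> w' \notin V -> (w == w') = false.
Proof. by move=> wV w'V; apply: contraNF w'V => /eqP <-. Qed.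

Lemma inc_new_edges :
  ((inc x u' = true) * (inc x v' = false) * (inc y u' = false) * (inc y v' = true) *
   (inc z u' = true) * (inc z v' = true))%type.
Proof.
rewrite !inc_x !inc_y !inc_z !eqxx !orbT ![_ == u]eq_sym ![_ == v]eq_sym.
by rewrite (neq_new u_V) // (neq_new v_V) // (negbTE neq_u'v') eq_sym (negbTE neq_u'v').
Qed.

Lemma is_pm_new_edges c L : {subset L <= E} ->
  is_pm V' (c ++ L) =
  [&& count (inc^~ u') c == 1, count (inc^~ v') c == 1 & is_pm V (c ++ L)].
Proof.
move=> LE; have untouched w : w \notin V -> count (inc^~ w) L = 0.
  move=> wV; apply/eqP; rewrite -leqn0 leqNgt -has_count.
  by apply/hasPn => e /LE eE; apply: contraNN wV; apply: endpoints_E.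
by rewrite /is_pm /= !count_cat !untouched // !addn0.
Qed.

Lemma is_pm_xy L : is_pm V [:: x, y & L] = is_pm V (t :: L).
Proof.
apply: eq_in_all => w wV /=.
rewrite inc_x inc_y inc_t (neq_new wV u'_V) (neq_new wV v'_V) !orbF.
by have [->|] := eqVneq w u; rewrite ?(negbTE neq_uv).
Qed.

Lemma is_pm_yx L : is_pm V [:: y, x & L] = is_pm V (t :: L).
Proof. by rewrite -is_pm_xy; apply: is_pm_perm; rewrite (perm_catCA [:: y] [:: x] L). Qed.

Lemma is_pm_z L : is_pm V (z :: L) = is_pm V L.
Proof.
by apply: eq_in_all => w wV /=; rewrite inc_z (neq_new wV u'_V) (neq_new wV v'_V).
Qed.

Lemma count_pm_new_edges c :
  count (fun L => is_pm V' (c ++ L)) (sublists E') =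
  \sum_(c' <- sublists [:: x; y; z])
     ((count (inc^~ u') (c ++ c') == 1) && (count (inc^~ v') (c ++ c') == 1)) *
     count (fun L => is_pm V (c ++ c' ++ L)) (sublists E).
Proof.
rewrite (count_sublists_cat _ [:: x; y; z] E); apply: eq_bigr => c' _.
set ok := (_ && _).
rewrite (@eq_in_count _ _ (fun L => ok && is_pm V (c ++ c' ++ L))) => [|L /sublists_sub LE].
  by case: ok; rewrite ?mul1n ?mul0n ?count_pred0.
by rewrite catA is_pm_new_edges // -catA andbA.
Qed.

(* When u' and v' are covered by x and y, the rest of the matching covers V
   minus u and v exactly once, i.e. it is a matching of V once t is added. *)
Lemma count_pm_extend :
  count (is_pm V') (sublists E') =
  count (is_pm V) (sublists E) + count (fun L => is_pm V (t :: L)) (sublists E).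
Proof.
rewrite (count_pm_new_edges [::]) /= !big_cons big_nil /= !inc_new_edges /=.
by rewrite (eq_count is_pm_xy) (eq_count is_pm_z) !mul0n !mul1n !add0n !addn0 addnC.
Qed.

Lemma count_pm_extend_z :
  count (fun L => is_pm V' (z :: L)) (sublists E') = count (is_pm V) (sublists E).
Proof.
rewrite (count_pm_new_edges [:: z]) /= !big_cons big_nil /= !inc_new_edges /=.
by rewrite (eq_count is_pm_z) !mul0n !mul1n !add0n !addn0.
Qed.

Lemma count_pm_extend_y :
  count (fun L => is_pm V' (y :: L)) (sublists E') =
  count (fun L => is_pm V (t :: L)) (sublists E).
Proof.
rewrite (count_pm_new_edges [:: y]) /= !big_cons big_nil /= !inc_new_edges /=.
by rewrite (eq_count is_pm_yx) !mul0n !mul1n !add0n !addn0.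
Qed.
End Extension.
End Matchings.

Definition level (p : point) : nat := p.1 + p.2.
Definition last_tile (D : seq bool) : point := foldl step (0, 0) D.
Definition entry_edge (p : point) (c : bool) : edge := if c then south p else west p.
Definition exit_edge (p : point) (c : bool) : edge := if c then north p else east p.
Definition tile_edges (p : point) : seq edge := [:: south p; north p; west p; east p].

Lemma level_step p b : level (step p b) = (level p).+1.
Proof. by case: b; rewrite /level /=; lia. Qed.

Lemma level_foldl p D : level (foldl step p D) = level p + size D.
Proof. by elim: D p => [|b D IH] p /=; rewrite ?addn0 // IH level_step addSnnS. Qed.

Lemma foldl_step_in p D : foldl step p D \in tiles_from p D.
Proof. by elim: D p => [|b D IH] p /=; rewrite inE ?eqxx // IH orbT. Qed.

Lemma tiles_from_level p D r : r \in tiles_from p D ->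
  level r < level (foldl step p D) \/ r = foldl step p D.
Proof.
elim: D p => [|b D IH] p /=; first by rewrite inE => /eqP ->; right.
rewrite inE => /orP [/eqP -> | /IH //]; left.
by rewrite level_foldl level_step; lia.
Qed.

Lemma tiles_from_rcons p D b :
  tiles_from p (rcons D b) = rcons (tiles_from p D) (step (foldl step p D) b).
Proof. by elim: D p => [|c D IH] p //=; rewrite IH. Qed.

Lemma last_tile_rcons D b : last_tile (rcons D b) = step (last_tile D) b.
Proof. by rewrite /last_tile foldl_rcons. Qed.

Lemma mem_edges D e : (e \in edges D) = has (fun r => e \in tile_edges r) (tiles D).
Proof. by rewrite mem_undup; apply/flatten_mapP/hasP => -[r rD er]; exists r. Qed.

Lemma mem_verts D w : (w \in verts D) = has (incident^~ w) (edges D).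
Proof.
rewrite mem_undup; apply/flatten_mapP/hasP => -[e eD we]; exists e => //;
  by move: we; rewrite /incident !inE ![w == _]eq_sym.
Qed.

Lemma edges_rcons D b e :
  (e \in edges (rcons D b)) = (e \in tile_edges (step (last_tile D) b)) || (e \in edges D).
Proof. by rewrite !mem_edges /tiles tiles_from_rcons has_rcons. Qed.

Lemma incident_tile_edges r e w : e \in tile_edges r -> incident e w ->
  r.1 <= w.1 <= r.1.+1 /\ r.2 <= w.2 <= r.2.+1.
Proof.
case: r w => r1 r2 [w1 w2].
by rewrite /incident !inE => /or4P [] /eqP -> /orP [] /eqP [<- <-] /=; lia.
Qed.

Lemma notin_verts_far D w : level (last_tile D) + 2 <= level w ->
  w != ((last_tile D).1.+1, (last_tile D).2.+1) -> w \notin verts D.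
Proof.
move=> far not_corner; apply/negP; rewrite mem_verts => /hasP [e].
rewrite mem_edges => /hasP [r rD er] /(incident_tile_edges er).
move: far not_corner; case: (tiles_from_level rD) => [| ->]; rewrite -/(last_tile D);
  case: (last_tile D) => [l1 l2]; case: w => [w1 w2]; rewrite /level xpair_eqE /=; lia.
Qed.

Definition pm_count (D : seq bool) : nat :=
  count (is_pm incident (verts D)) (sublists (edges D)).

(* [t :: L] can only be a perfect matching if t \notin L, so this counts the
   perfect matchings that contain the exit edge t. *)
Definition pm_count_exit (D : seq bool) (c : bool) : nat :=
  count (fun L => is_pm incident (verts D) (exit_edge (last_tile D) c :: L))
        (sublists (edges D)).

Lemma num_pm_count D : num_pm D = pm_count D.
Proof.
rewrite /num_pm /pm_count -(card_sets_sublists (0, 0, true)); apply: eq_card => S.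
rewrite !inE; apply: eq_all => w; congr (_ == 1).
by rewrite enumT count_map /enum_mem count_filter; apply: eq_count => i; rewrite /= andbC.
Qed.

Section AddTile.
Variables (D : seq bool) (b : bool).

Let p := last_tile D.
Let q := step p b.
Let u : point := q.
Let v : point := (p.1.+1, p.2.+1).
Let u' := step u b.
Let v' := step v b.
Let x := entry_edge q (~~ b).
Let y := exit_edge q (~~ b).
Let z := exit_edge q b.
Let t := exit_edge p b.

Lemma incident_x w : incident x w = (w == u) || (w == u').
Proof. by rewrite /x /u' /u /q /entry_edge /incident; case: b; rewrite ![_ == w]eq_sym. Qed.
Lemma incident_y w : incident y w = (w == v) || (w == v').
Proof. by rewrite /y /v' /v /q /exit_edge /incident; case: b; rewrite ![_ == w]eq_sym. Qed.
Lemma incident_z w : incident z w = (w == u') || (w == v').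
Proof. by rewrite /z /u' /v' /u /v /q /exit_edge /incident; case: b; rewrite ![_ == w]eq_sym. Qed.
Lemma incident_t w : incident t w = (w == u) || (w == v).
Proof. by rewrite /t /u /v /q /exit_edge /incident; case: b; rewrite ![_ == w]eq_sym. Qed.

Lemma t_edges : t \in edges D.
Proof.
rewrite mem_edges; apply/hasP; exists p; first exact: foldl_step_in.
by rewrite /t /exit_edge; case: b; rewrite !inE eqxx ?orbT.
Qed.

Lemma endpoints_edges e w : e \in edges D -> incident e w -> w \in verts D.
Proof. by move=> eD ew; rewrite mem_verts; apply/hasP; exists e. Qed.

Lemma u_verts : u \in verts D.
Proof. by apply: (endpoints_edges t_edges); rewrite incident_t eqxx. Qed.
Lemma v_verts : v \in verts D.
Proof. by apply: (endpoints_edges t_edges); rewrite incident_t eqxx orbT. Qed.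
Lemma u'_verts : u' \notin verts D.
Proof.
by apply: notin_verts_far; rewrite /u' /u /q /p /level; case: b => /=; rewrite ?xpair_eqE; lia.
Qed.
Lemma v'_verts : v' \notin verts D.
Proof.
by apply: notin_verts_far; rewrite /v' /v /p /level; case: b => /=; rewrite ?xpair_eqE; lia.
Qed.
Lemma neq_uv : u != v.
Proof. by rewrite /u /v /q; case: b; rewrite /= xpair_eqE; lia. Qed.
Lemma neq_u'v' : u' != v'.
Proof. by rewrite /u' /v' /u /v /q; case: b; rewrite /= xpair_eqE; lia. Qed.

Lemma tile_edges_new : tile_edges q =i [:: t; x; y; z].
Proof.
apply: perm_mem; apply/permP => f.
rewrite /tile_edges /t /x /y /z /q /entry_edge /exit_edge.
by case: b; rewrite /= /south /north /west /east /=; lia.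
Qed.

Lemma mem_edges_rcons : edges (rcons D b) =i [:: x, y, z & edges D].
Proof.
move=> e; rewrite edges_rcons -/p -/q tile_edges_new !inE.
by have [-> | _] := eqVneq e t; rewrite /= ?t_edges ?orbT // -!orbA.
Qed.

Lemma perm_edges_rcons : perm_eq (edges (rcons D b)) [:: x, y, z & edges D].
Proof.
apply: uniq_perm; [exact: undup_uniq | | exact: mem_edges_rcons].
have new_notin e w : w \notin verts D -> incident e w -> e \notin edges D.
  by move=> wD ew; apply: contra wD => /endpoints_edges; apply.
rewrite /= !inE undup_uniq !andbT !negb_or.
rewrite (new_notin x u') ?(new_notin y v') ?(new_notin z u') ?u'_verts ?v'_verts;
  rewrite ?incident_x ?incident_y ?incident_z ?eqxx ?orbT //= !andbT.
by rewrite /x /y /z /q /entry_edge /exit_edge; case: b; rewrite /= !xpair_eqE; lia.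
Qed.

Lemma verts_rcons : verts (rcons D b) =i [:: u', v' & verts D].
Proof.
move=> w; rewrite mem_verts (eq_has_r mem_edges_rcons) /= -mem_verts.
rewrite incident_x incident_y incident_z !inE.
have [-> | _] := eqVneq w u; first by rewrite u_verts !orbT.
by have [-> | _] := eqVneq w v; rewrite ?v_verts ?orbT //=; case: (w == u'); case: (w == v').
Qed.

Lemma pm_count_rcons : pm_count (rcons D b) = pm_count D + pm_count_exit D b.
Proof.
rewrite /pm_count /pm_count_exit (count_pm_eq incident [::] verts_rcons perm_edges_rcons).
exact: (count_pm_extend endpoints_edges u_verts v_verts u'_verts v'_verts neq_uv neq_u'v'
          incident_x incident_y incident_z incident_t).
Qed.

Lemma pm_count_exit_rcons c :
  pm_count_exit (rcons D b) c = if c == b then pm_count D else pm_count_exit D b.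
Proof.
rewrite /pm_count_exit /pm_count last_tile_rcons -/p -/q.
have -> : exit_edge q c = if c == b then z else y by rewrite /z /y; case: c; case: b.
rewrite (count_pm_eq incident [:: _] verts_rcons perm_edges_rcons).
case: eqP => _.
  exact: (count_pm_extend_z endpoints_edges u_verts v_verts u'_verts v'_verts neq_u'v'
            incident_x incident_y incident_z).
exact: (count_pm_extend_y endpoints_edges u_verts v_verts u'_verts v'_verts neq_uv neq_u'v'
          incident_x incident_y incident_z incident_t).
Qed.
End AddTile.

Section Mx2.
Local Open Scope ring_scope.

Definition mx2 (T : Type) (a b c d : T) : 'M[T]_2 :=
  \matrix_(i, j) if i == ord0 then (if j == ord0 then a else b)
                 else (if j == ord0 then c else d).

Lemma mx2_eta (T : Type) (A : 'M[T]_2) : A = mx2 (A 0 0) (A 0 1) (A 1 0) (A 1 1).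
Proof.
apply/matrixP => i j; rewrite mxE.
by case: i => [[|[|//]] ?]; case: j => [[|[|//]] ?]; congr (A _ _); apply: val_inj.
Qed.

Lemma tr_mx2 (T : Type) (a b c d : T) : (mx2 a b c d)^T = mx2 a c b d.
Proof.
apply/matrixP => i j; rewrite !mxE.
by case: i => [[|[|//]] ?]; case: j => [[|[|//]] ?].
Qed.

Variable R : pzSemiRingType.

Lemma mul_mx2 (a b c d a' b' c' d' : R) :
  mx2 a b c d * mx2 a' b' c' d' =
  mx2 (a * a' + b * c') (a * b' + b * d') (c * a' + d * c') (c * b' + d * d').
Proof.
apply/matrixP => i j; rewrite -mulmxE !mxE !big_ord_recl big_ord0 !mxE.
by case: i => [[|[|//]] ?]; case: j => [[|[|//]] ?]; rewrite /= addr0.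
Qed.

Lemma mx2_1 : 1 = mx2 1 0 0 1 :> 'M[R]_2.
Proof.
apply/matrixP => i j; rewrite !mxE.
by case: i => [[|[|//]] ?]; case: j => [[|[|//]] ?].
Qed.

End Mx2.

Section TransferMatrices.
Local Open Scope ring_scope.

Definition cf_mx (a : nat) : 'M[nat]_2 := mx2 a 1 1 0.

Definition turn_mx (f : bool) : 'M[nat]_2 := if f then cf_mx 1 else mx2 1 0 1 1.

(* Flag i is true iff tile G_i is entered and left in the same direction;
   G_1 is entered through its south edge and G_d left in direction c. *)
Definition straight (D : seq bool) (c : bool) : seq bool :=
  pairmap (fun b b' => b == b') true (rcons D c).

Definition transfer_mx (D : seq bool) (c : bool) : 'M[nat]_2 :=
  cf_mx 1 * \prod_(f <- straight D c) turn_mx f.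

Lemma mul_turn_mx (M : 'M[nat]_2) f :
  M * turn_mx f =
  mx2 (M 0 0 + M 0 1) (if f then M 0 0 else M 0 1)
      (M 1 0 + M 1 1) (if f then M 1 0 else M 1 1).
Proof.
rewrite [M in LHS]mx2_eta /turn_mx /cf_mx.
by case: f; rewrite mul_mx2 !(mulr1, mulr0, addr0, add0r).
Qed.

Lemma transfer_mx_rcons D b c :
  transfer_mx (rcons D b) c = transfer_mx D b * turn_mx (b == c).
Proof.
by rewrite /transfer_mx /straight -cats1 pairmap_cat cats1 last_rcons big_rcons /= mulrA.
Qed.

Lemma pm_count_transfer D c :
  pm_count D = transfer_mx D c 0 0 /\ pm_count_exit D c = transfer_mx D c 0 1.
Proof.
elim/last_ind: D c => [|D b IH] c.
  by case: c; rewrite /transfer_mx /straight /= big_seq1 /turn_mx /cf_mx mul_mx2 !mxE;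
    vm_compute.
have [IH0 IH1] := IH b.
rewrite transfer_mx_rcons mul_turn_mx pm_count_rcons pm_count_exit_rcons IH0 IH1 !mxE /=.
by rewrite eq_sym; case: (c == b).
Qed.
End TransferMatrices.

Definition sign_tile (f : edge -> bool) (p : point) : Prop :=
  [/\ f (north p) = f (west p), f (south p) = f (east p) & f (north p) != f (south p)].

Lemma sign_tile_flip f p b c : sign_tile f p ->
  (f (entry_edge p b) != f (exit_edge p c)) = (b == c).
Proof.
by case=> NW SE NS; case: b; case: c; rewrite /= -?NW -?SE ?eqxx // eq_sym.
Qed.

Lemma sign_flips_from f p b D eN : {in tiles_from p D, forall r, sign_tile f r} ->
  pairmap (fun s s' => s != s') (f (entry_edge p b)) (map f (walk p D eN)) =
  pairmap (fun b b' => b == b') b (rcons D eN).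
Proof.
elim: D p b => [|c D IH] p b signD /=.
  by rewrite sign_tile_flip //; apply: signD; rewrite mem_head.
rewrite sign_tile_flip; last by apply: signD; rewrite mem_head.
congr (_ :: _).
have -> : (if c then north p else east p) = entry_edge (step p c) c by case: (c).
by apply: IH => r rD; apply: signD; rewrite inE rD orbT.
Qed.

Lemma sign_flips f D eN : sign_function D f ->
  pairmap (fun s s' => s != s') (f (south (0, 0))) (map f (walk (0, 0) D eN)) = straight D eN.
Proof. exact: (sign_flips_from true). Qed.

Lemma sign_blocks_consS s k a :
  sign_blocks s (k.+1 :: a) = s :: nseq k s ++ sign_blocks (~~ s) a.
Proof.
rewrite /sign_blocks /= -[1]addn0 iotaDl -map_comp; congr (_ :: _ ++ flatten _).
by apply: eq_map => i /=; case: (odd i); rewrite ?negbK.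
Qed.

Section ContinuantMatrices.
Local Open Scope ring_scope.

Lemma prod_cf_mx_rev a : \prod_(x <- rev a) cf_mx x = (\prod_(x <- a) cf_mx x)^T.
Proof.
elim: a => [|x a IH]; first by rewrite big_nil trmx1.
by rewrite rev_cons -cats1 big_cat big_seq1 /= IH big_cons -mulmxE trmx_mul mulmxE tr_mx2.
Qed.

Lemma prod_turn_straight k : cf_mx 1 * \prod_(f <- nseq k false) turn_mx f = cf_mx k.+1.
Proof.
have -> : \prod_(f <- nseq k false) turn_mx f = mx2 1 0 k 1.
  elim: k => [|k IH]; first by rewrite big_nil mx2_1.
  by rewrite big_cons IH mul_mx2 !(mul1r, mul0r, mulr0, addr0, add0r).
by rewrite /cf_mx mul_mx2 !(mul1r, mulr1, mul0r, mulr0, addr0, add0r).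
Qed.

Lemma pairmap_neq_nseq (s : bool) k l :
  pairmap (fun s s' => s != s') s (nseq k s ++ l) =
  nseq k false ++ pairmap (fun s s' => s != s') s l.
Proof. by elim: k => //= k ->; rewrite eqxx. Qed.

Lemma pairmap_neq_block (s : bool) k l :
  pairmap (fun s s' => s != s') s (nseq k s ++ ~~ s :: l) =
  nseq k false ++ true :: pairmap (fun s s' => s != s') (~~ s) l.
Proof. by rewrite pairmap_neq_nseq /=; case: s. Qed.

Lemma prod_turn_sign_blocks s k a : all (fun x => 0 < x)%N a ->
  cf_mx 1 * \prod_(f <- pairmap (fun s s' => s != s') s (nseq k s ++ sign_blocks (~~ s) a))
              turn_mx f =
  \prod_(x <- k.+1 :: a) cf_mx x.
Proof.
elim: a k s => [|a1 a IH] k s a_pos.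
  by rewrite pairmap_neq_nseq [pairmap _ _ _]/= cats0 prod_turn_straight big_seq1.
case/andP: a_pos => a1_pos a_pos; case: a1 a1_pos => [//|j] _.
rewrite sign_blocks_consS pairmap_neq_block big_cat big_cons /= [in RHS]big_cons.
by rewrite mulrA prod_turn_straight IH.
Qed.

End ContinuantMatrices.

(* The continuant K(a_1, ..., a_n): the numerator of [a_1; a_2, ..., a_n]. *)
Definition continuant (a : seq nat) : nat := (\prod_(x <- a) cf_mx x)%R 0%R 0%R.

Lemma continuant_palindrome a0 a :
  continuant (rev (a0 :: a) ++ a0 :: a) = continuant (a0 :: a) ^ 2 + continuant a ^ 2.
Proof.
rewrite /continuant big_cat /= prod_cf_mx_rev !big_cons.
set P := (\prod_(x <- a) cf_mx x)%R.
rewrite [P]mx2_eta /cf_mx mul_mx2 tr_mx2 mul_mx2 !mxE /=.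
by rewrite !mul1r mul0r addr0 -!mulnn.
Qed.

Lemma m_snake_continuant a D : all (fun x => 0 < x) a -> is_snake a D ->
  m_snake a D = continuant a.
Proof.
move=> a_pos [[small ->] | [big [_ [f [eN [s [signD blocks]]]]]]].
  rewrite /m_snake small /continuant.
  case: a a_pos small => [|a0 [|a1 a]] /=; first by rewrite big_nil mx2_1 mxE.
    by case: a0 => [|[|]] //; rewrite big_seq1 mxE.
  by case/and3P; lia.
rewrite /m_snake leqNgt big /= num_pm_count.
have [-> _] := pm_count_transfer D eN.
rewrite /transfer_mx -(sign_flips eN signD).
case: a a_pos big blocks => [//|[//|k] a] /andP [_ a_pos] _.
rewrite /distinguished_edges sign_blocks_consS /= => -[-> ->].
by rewrite prod_turn_sign_blocks.
Qed.

Theorem theorem3p9 (a : seq nat) (D Dpal D' : seq bool) :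
  a != [::] ->
  all (fun x => 0 < x) a ->
  is_snake a D ->
  is_snake (rev a ++ a) Dpal ->
  is_snake (behead a) D' ->
  m_snake (rev a ++ a) Dpal = m_snake a D ^ 2 + m_snake (behead a) D' ^ 2.
Proof.
case: a => [//|a0 a] _ a_pos snakeD snakeDpal snakeD'.
have pal_pos : all (fun x => 0 < x) (rev (a0 :: a) ++ a0 :: a) by rewrite all_cat all_rev a_pos.
have tail_pos : all (fun x => 0 < x) a by case/andP: a_pos.
rewrite !m_snake_continuant //; exact: continuant_palindrome.
Qed.
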